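(* Let $g\ge 1$, let $n\in\mathbb{Z}\setminus\{0\}$, and let $u_1,\dots,u_{2g+1}$ be pairwise distinct complex numbers, regarded as varying in a small open set. Consider the hyperelliptic curve $v^2=(u-u_1)\cdots(u-u_{2g+1})$. Let $\gamma$ be a closed cycle on this curve that avoids the branch points and the point at infinity, transported continuously as the $u_j$ vary. Define $$a_i=\oint_\gamma \frac{v^n\,du}{u-u_i},\qquad i=1,\dots,2g+1,$$ as functions of $(u_1,\dots,u_{2g+1})$. Then $$\frac{\partial a_i}{\partial u_j}=\frac{n}{2}\,\frac{a_i-a_j}{u_j-u_i}\quad\text{for all } i\neq j,\qquad\text{and}\qquad \sum_{i=1}^{2g+1}a_i=0.$$
   Context: The system in the conclusion is the upper triangular reduction of the rank two Schlesinger system. In this reduction all residue matrices have eigenvalues $\pm n/4$: $A^{(i)}=\begin{pmatrix} n/4 & a_i\\ 0 & -n/4\end{pmatrix}$. *)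

From Stdlib Require Import Reals ZArith.
From Coquelicot Require Import Coquelicot.
Open Scope R_scope.

(* Integer powers of complex numbers (v <> 0 when n < 0). *)
Definition Cpowz (v : C) (n : Z) : C :=
  match n with
  | Z0 => RtoC 1
  | Zpos p => Cpow v (Pos.to_nat p)
  | Zneg p => Cinv (Cpow v (Pos.to_nat p))
  end.

(* Points of C^N are represented as U : nat -> C, only the indices k < N matter. *)

Fixpoint Cprod_lt (N : nat) (f : nat -> C) : C :=
  match N with
  | O => RtoC 1
  | S m => Cmult (Cprod_lt m f) (f m)
  end.

Fixpoint Csum_lt (N : nat) (f : nat -> C) : C :=
  match N with
  | O => RtoC 0
  | S m => Cplus (Csum_lt m f) (f m)
  end.

Definition close_lt (N : nat) (U U' : nat -> C) (d : R) : Prop :=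
  forall k, (k < N)%nat -> Cmod (Cminus (U' k) (U k)) < d.

Definition open_CN (N : nat) (Om : (nat -> C) -> Prop) : Prop :=
  forall U, Om U -> exists d, 0 < d /\ forall U', close_lt N U U' d -> Om U'.

Definition shift_coord (U : nat -> C) (j : nat) (h : C) : nat -> C :=
  fun k => if Nat.eqb k j then Cplus (U k) h else U k.

Definition has_partial (F : (nat -> C) -> C) (U : nat -> C) (j : nat) (L : C) : Prop :=
  filterlim (fun h : C => Cdiv (Cminus (F (shift_coord U j h)) (F U)) h)
            (locally' (0 : C)) (locally L).

Definition jointly_continuous_on (N : nat) (Om : (nat -> C) -> Prop)
  (V : (nat -> C) -> R -> C) : Prop :=
  forall U t, Om U -> 0 <= t <= 1 ->
    forall eps, 0 < eps -> exists d, 0 < d /\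
      forall U' t', Om U' -> 0 <= t' <= 1 -> close_lt N U U' d -> Rabs (t' - t) < d ->
        Cmod (Cminus (V U' t') (V U t)) < eps.

(* a_i(U) = \oint_gamma v^n du / (u - u_i), with the cycle parametrised by
   t in [0,1] |-> (gamma t, V U t). *)
Definition a_coef (n : Z) (gamma gamma' : R -> C) (V : (nat -> C) -> R -> C)
  (i : nat) (U : nat -> C) : C :=
  RInt (V := C_R_CompleteNormedModule)
    (fun t => Cdiv (Cmult (Cpowz (V U t) n) (gamma' t)) (Cminus (gamma t) (U i))) 0 1.

(* Along the cycle, [v^2 = prod_k (u - u_k)] gives [d(v^n) = (n/2) v^n sum_k du / (u - u_k)],
   so [sum_i a_i] is [(2/n)] times the integral of an exact differential over a closed cycle,
   hence [0].  Moving the branch point [u_j] by [h] multiplies [v^2] by [1 - h / (u - u_j)], so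
   [d(v^n)/du_j = -(n/2) v^n / (u - u_j)], and the partial fraction
   [1 / ((u - u_i) (u - u_j)) = (1 / (u - u_i) - 1 / (u - u_j)) / (u_i - u_j)] turns the derivative
   of [a_i] into [(n/2) (a_i - a_j) / (u_j - u_i)].  These expansions hold uniformly in the
   parameter of the cycle, which justifies differentiating under the integral sign. *)

From Stdlib Require Import Reals ZArith Lra Lia Classical IndefiniteDescription.
From Coquelicot Require Import Coquelicot.
Open Scope R_scope.

Lemma Cmod_lb_neq_0 (z : C) (c : R) : 0 < c -> c <= Cmod z -> z <> 0%C.
Proof. intros Pc H E; rewrite E, Cmod_0 in H; lra. Qed.

Lemma Cmod_sub_le (x y : C) : Cmod (Cminus x y) <= Cmod x + Cmod y.
Proof. unfold Cminus; eapply Rle_trans; [apply Cmod_triangle|]; rewrite Cmod_opp; lra. Qed.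

Lemma Cmod_sub_ge (a b : C) : Cmod a - Cmod (Cminus a b) <= Cmod b.
Proof.
  pose proof (Cmod_triangle b (Cminus a b)) as H.
  replace (Cplus b (Cminus a b)) with a in H by ring; lra.
Qed.

Lemma Cmod_sub_ge_r (a b : C) : Cmod a - Cmod (Cminus b a) <= Cmod b.
Proof.
  pose proof (Cmod_sub_ge a b) as H.
  replace (Cminus a b) with (Copp (Cminus b a)) in H by ring; rewrite Cmod_opp in H; exact H.
Qed.

Lemma small_scale (eps K b : R) : 0 < eps -> 0 < K -> 0 < b ->
  exists e1, 0 < e1 /\ e1 <= b /\ e1 * K <= eps.
Proof.
  intros He HK Hb; exists (Rmin b (eps / K)); repeat split.
  - apply Rmin_pos; [lra | apply Rdiv_lt_0_compat; lra].
  - apply Rmin_l.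
  - apply Rle_trans with (eps / K * K); [apply Rmult_le_compat_r; [lra | apply Rmin_r] | right; field; lra].
Qed.

Lemma Cmod_div_le (N Q : C) (B q : R) : 0 < q -> q <= Cmod Q -> Cmod N <= B ->
  Cmod (Cmult N (Cinv Q)) <= B / q.
Proof.
  intros Pq HQ HN.
  rewrite Cmod_mult, Cmod_inv by exact (Cmod_lb_neq_0 Q q Pq HQ).
  apply Rmult_le_compat; auto using Cmod_ge_0.
  - left; apply Rinv_0_lt_compat; lra.
  - apply Rinv_le_contravar; lra.
Qed.

Section Asymptotics.
Context {X : Type} (F : (X -> Prop) -> Prop) {FF : Filter F}.

Definition vanishing (d : X -> C) :=
  forall e, 0 < e -> F (fun x => Cmod (d x) < e).
Definition ev_bounded (f : X -> C) :=
  exists M, F (fun x => Cmod (f x) <= M).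
Definition ev_bounded_away (f : X -> C) :=
  exists c, 0 < c /\ F (fun x => c <= Cmod (f x)).
Definition tends (f a : X -> C) :=
  vanishing (fun x => Cminus (f x) (a x)).
Definition first_order (d f a L : X -> C) := forall eps, 0 < eps ->
  F (fun x => Cmod (Cminus (Cminus (f x) (a x)) (Cmult (d x) (L x))) <= eps * Cmod (d x)).

Lemma ev_bounded_pos f : ev_bounded f -> exists M, 0 < M /\ F (fun x => Cmod (f x) <= M).
Proof.
  intros [M HM]; exists (Rabs M + 1); split; [pose proof (Rabs_pos M); lra|].
  revert HM; apply filter_imp; intros x H.
  pose proof (RRle_abs M); lra.
Qed.

Lemma ev_bounded_const c : ev_bounded (fun _ => c).
Proof. exists (Cmod c); apply filter_forall; intros; lra. Qed.

Lemma ev_bounded_mul f g : ev_bounded f -> ev_bounded g -> ev_bounded (fun x => Cmult (f x) (g x)).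
Proof.
  intros Hf Hg.
  destruct (ev_bounded_pos f Hf) as [M1 [P1 H1]], (ev_bounded_pos g Hg) as [M2 [P2 H2]].
  exists (M1 * M2); generalize (filter_and (F := F) _ _ H1 H2); apply filter_imp; intros x [A B].
  rewrite Cmod_mult; apply Rmult_le_compat; auto using Cmod_ge_0.
Qed.

Lemma ev_bounded_add f g : ev_bounded f -> ev_bounded g -> ev_bounded (fun x => Cplus (f x) (g x)).
Proof.
  intros [M1 H1] [M2 H2]; exists (M1 + M2).
  generalize (filter_and (F := F) _ _ H1 H2); apply filter_imp; intros x [A B].
  eapply Rle_trans; [apply Cmod_triangle | lra].
Qed.

Lemma ev_bounded_opp f : ev_bounded f -> ev_bounded (fun x => Copp (f x)).
Proof. intros [M H]; exists M; revert H; apply filter_imp; intros x; rewrite Cmod_opp; auto. Qed.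

Lemma ev_bounded_inv f : ev_bounded_away f -> ev_bounded (fun x => Cinv (f x)).
Proof.
  intros [c [Pc H]]; exists (/ c); revert H; apply filter_imp; intros x H.
  rewrite Cmod_inv by exact (Cmod_lb_neq_0 _ c Pc H).
  apply Rinv_le_contravar; lra.
Qed.

Lemma ev_bounded_pow a m : ev_bounded a -> ev_bounded (fun x => Cpow (a x) m).
Proof.
  intros Ba; induction m as [|m IH]; simpl.
  - apply ev_bounded_const.
  - apply ev_bounded_mul; auto.
Qed.

Lemma ev_bounded_away_const (c : C) : c <> 0%C -> ev_bounded_away (fun _ => c).
Proof. intros H; exists (Cmod c); split; [apply Cmod_gt_0; auto | apply filter_forall; intros; lra]. Qed.

Lemma ev_bounded_away_pow a m : ev_bounded_away a -> ev_bounded_away (fun x => Cpow (a x) m).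
Proof.
  intros [c [Pc H]]; exists (c ^ m); split; [apply pow_lt; auto|].
  revert H; apply filter_imp; intros x H; rewrite Cmod_pow; apply pow_incr; lra.
Qed.

Lemma ev_bounded_Cpowz a n : ev_bounded_away a -> ev_bounded a ->
  ev_bounded (fun x => Cpowz (a x) n).
Proof.
  intros La Ba; destruct n; simpl.
  - apply ev_bounded_const.
  - apply ev_bounded_pow; auto.
  - apply ev_bounded_inv, ev_bounded_away_pow; auto.
Qed.

Lemma ev_bounded_Cprod (a : nat -> X -> C) m : (forall k, (k < m)%nat -> ev_bounded (a k)) ->
  ev_bounded (fun x => Cprod_lt m (fun k => a k x)).
Proof.
  induction m; intros H; simpl; [apply ev_bounded_const|].
  apply ev_bounded_mul; [apply IHm; intros; apply H|apply H]; lia.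
Qed.

Lemma ev_bounded_Csum (a : nat -> X -> C) m : (forall k, (k < m)%nat -> ev_bounded (a k)) ->
  ev_bounded (fun x => Csum_lt m (fun k => a k x)).
Proof.
  induction m; intros H; simpl; [apply ev_bounded_const|].
  apply ev_bounded_add; [apply IHm; intros; apply H|apply H]; lia.
Qed.

Lemma tends_const a : tends (fun _ => a) (fun _ => a).
Proof.
  intros e He; apply filter_forall; intros x.
  replace (Cminus a a) with (RtoC 0) by ring; rewrite Cmod_0; auto.
Qed.

Lemma tends_sub_const f a c : tends f a -> tends (fun x => Cminus (f x) c) (fun x => Cminus (a x) c).
Proof.
  intros H e He; generalize (H e He); apply filter_imp; intros x.
  replace (Cminus (Cminus (f x) c) (Cminus (a x) c)) with (Cminus (f x) (a x)) by ring; auto.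
Qed.

Lemma tends_add f a g b : tends f a -> tends g b ->
  tends (fun x => Cplus (f x) (g x)) (fun x => Cplus (a x) (b x)).
Proof.
  intros H1 H2 e He.
  generalize (filter_and (F := F) _ _ (H1 (e/2) ltac:(lra)) (H2 (e/2) ltac:(lra))).
  apply filter_imp; intros x [A B].
  replace (Cminus (Cplus (f x) (g x)) (Cplus (a x) (b x)))
    with (Cplus (Cminus (f x) (a x)) (Cminus (g x) (b x))) by ring.
  eapply Rle_lt_trans; [apply Cmod_triangle | lra].
Qed.

Lemma tends_mul f a g b : tends f a -> tends g b -> ev_bounded a -> ev_bounded b ->
  tends (fun x => Cmult (f x) (g x)) (fun x => Cmult (a x) (b x)).
Proof.
  intros H1 H2 Ba Bb e He.
  destruct (ev_bounded_pos a Ba) as [Ma [Pa HA]], (ev_bounded_pos b Bb) as [Mb [Pb HB]].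
  destruct (small_scale e (Ma + Mb + 1) 1 He ltac:(lra) Rlt_0_1) as [e1 [Pe1 [Le1 Le2]]].
  generalize (filter_and (F := F) _ _ (filter_and (F := F) _ _ (H1 e1 Pe1) (H2 e1 Pe1))
    (filter_and (F := F) _ _ HA HB)).
  apply filter_imp; intros x [[A B] [C D]].
  replace (Cminus (Cmult (f x) (g x)) (Cmult (a x) (b x))) with
    (Cplus (Cplus (Cmult (Cminus (f x) (a x)) (b x)) (Cmult (a x) (Cminus (g x) (b x))))
      (Cmult (Cminus (f x) (a x)) (Cminus (g x) (b x)))) by ring.
  eapply Rle_lt_trans; [apply Cmod_triangle|].
  eapply Rle_lt_trans; [apply Rplus_le_compat_r, Cmod_triangle|]; rewrite !Cmod_mult.
  pose proof (Cmod_ge_0 (Cminus (f x) (a x))); pose proof (Cmod_ge_0 (Cminus (g x) (b x))).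
  pose proof (Cmod_ge_0 (a x)); pose proof (Cmod_ge_0 (b x)).
  assert (Cmod (Cminus (f x) (a x)) * Cmod (b x) <= e1 * Mb) by (apply Rmult_le_compat; lra).
  assert (Cmod (a x) * Cmod (Cminus (g x) (b x)) <= Ma * e1) by (apply Rmult_le_compat; lra).
  assert (Cmod (Cminus (f x) (a x)) * Cmod (Cminus (g x) (b x)) < e1 * 1) by nra.
  nra.
Qed.

Lemma tends_inv f a : tends f a -> ev_bounded_away a -> tends (fun x => Cinv (f x)) (fun x => Cinv (a x)).
Proof.
  intros H [c [Pc HL]] e He.
  destruct (small_scale (e * (c * c / 4)) 1 (c/2) ltac:(apply Rmult_lt_0_compat; nra) Rlt_0_1 ltac:(lra))
    as [e1 [Pe1 [L1 L2]]].
  generalize (filter_and (F := F) _ _ (H e1 Pe1) HL); apply filter_imp; intros x [A C].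
  pose proof (Cmod_sub_ge_r (a x) (f x)).
  assert (nf : f x <> 0%C) by (apply (Cmod_lb_neq_0 _ (c/2)); lra).
  assert (na : a x <> 0%C) by exact (Cmod_lb_neq_0 _ c Pc C).
  replace (Cminus (Cinv (f x)) (Cinv (a x)))
    with (Cmult (Copp (Cminus (f x) (a x))) (Cinv (Cmult (f x) (a x)))) by (field; auto).
  assert (Hq : c * c / 2 <= Cmod (Cmult (f x) (a x))).
  { rewrite Cmod_mult; pose proof (Cmod_ge_0 (a x)); nra. }
  eapply Rle_lt_trans; [apply (Cmod_div_le _ _ e1 (c * c / 2) ltac:(nra) Hq); rewrite Cmod_opp; lra|].
  apply Rmult_lt_reg_r with (c * c / 2); [nra|].
  unfold Rdiv; rewrite Rmult_assoc, Rinv_l by nra; nra.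
Qed.

Lemma tends_pow f a m : tends f a -> ev_bounded a -> tends (fun x => Cpow (f x) m) (fun x => Cpow (a x) m).
Proof.
  intros H Ba; induction m as [|m IH]; simpl.
  - apply tends_const.
  - apply tends_mul; auto; apply ev_bounded_pow; auto.
Qed.

Lemma tends_Cpowz f a n : tends f a -> ev_bounded_away a -> ev_bounded a ->
  tends (fun x => Cpowz (f x) n) (fun x => Cpowz (a x) n).
Proof.
  intros H La Ba; destruct n; simpl.
  - apply tends_const.
  - apply tends_pow; auto.
  - apply tends_inv; [apply tends_pow | apply ev_bounded_away_pow]; auto.
Qed.

Lemma tends_Csum (f a : nat -> X -> C) m : (forall k, (k < m)%nat -> tends (f k) (a k)) ->
  tends (fun x => Csum_lt m (fun k => f k x)) (fun x => Csum_lt m (fun k => a k x)).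
Proof.
  induction m; intros H; simpl; [apply tends_const|].
  apply tends_add; [apply IHm; intros; apply H|apply H]; lia.
Qed.

Lemma first_order_ext d f a L f' a' L' :
  (forall x, f x = f' x) -> (forall x, a x = a' x) -> (forall x, L x = L' x) ->
  first_order d f a L -> first_order d f' a' L'.
Proof.
  intros E1 E2 E3 H e He; generalize (H e He); apply filter_imp; intros x.
  rewrite E1, E2, E3; auto.
Qed.

Lemma first_order_sub_const d f a L c :
  first_order d f a L -> first_order d (fun x => Cminus (f x) c) (fun x => Cminus (a x) c) L.
Proof.
  intros H e He; generalize (H e He); apply filter_imp; intros x.
  replace (Cminus (Cminus (Cminus (f x) c) (Cminus (a x) c)) (Cmult (d x) (L x)))
    with (Cminus (Cminus (f x) (a x)) (Cmult (d x) (L x))) by ring; auto.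
Qed.

Lemma first_order_tends d f a L : first_order d f a L -> vanishing d -> ev_bounded L -> tends f a.
Proof.
  intros H Hd HL e He; destruct (ev_bounded_pos L HL) as [M [PM HM]].
  generalize (filter_and (F := F) _ _ (filter_and (F := F) _ _ (H 1 Rlt_0_1)
    (Hd (e / (1 + M)) ltac:(apply Rdiv_lt_0_compat; lra))) HM).
  apply filter_imp; intros x [[A B] C].
  replace (Cminus (f x) (a x))
    with (Cplus (Cminus (Cminus (f x) (a x)) (Cmult (d x) (L x))) (Cmult (d x) (L x))) by ring.
  eapply Rle_lt_trans; [apply Cmod_triangle|]; rewrite Cmod_mult.
  pose proof (Cmod_ge_0 (d x)).
  assert (Cmod (d x) * Cmod (L x) <= Cmod (d x) * M) by (apply Rmult_le_compat_l; lra).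
  assert (Cmod (d x) * (1 + M) < e).
  { apply Rmult_lt_reg_r with (/ (1 + M)); [apply Rinv_0_lt_compat; lra|].
    rewrite Rmult_assoc, Rinv_r, Rmult_1_r by lra; exact B. }
  nra.
Qed.

Lemma first_order_mul d f a K1 g b K2 :
  first_order d f a (fun x => Cmult (a x) (K1 x)) -> first_order d g b (fun x => Cmult (b x) (K2 x)) ->
  vanishing d -> ev_bounded a -> ev_bounded b -> ev_bounded K1 -> ev_bounded K2 ->
  first_order d (fun x => Cmult (f x) (g x)) (fun x => Cmult (a x) (b x))
    (fun x => Cmult (Cmult (a x) (b x)) (Cplus (K1 x) (K2 x))).
Proof.
  intros H1 H2 Hd Ba Bb BK1 BK2.
  assert (Cg : tends g b) by (apply (first_order_tends d g b _ H2 Hd), ev_bounded_mul; auto).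
  destruct (ev_bounded_pos a Ba) as [Ma [Pa HA]], (ev_bounded_pos b Bb) as [Mb [Pb HB]].
  destruct (ev_bounded_pos K1 BK1) as [Mk [Pk HK]].
  intros eps Heps; set (K := Mb + 1 + Ma + Ma * Mk); assert (PK : 0 < K) by (unfold K; nra).
  destruct (small_scale eps K 1 Heps PK Rlt_0_1) as [e1 [Pe1 [Le1 Le2]]].
  generalize (filter_and (F := F) _ _ (filter_and (F := F) _ _ (H1 e1 Pe1) (H2 e1 Pe1))
     (filter_and (F := F) _ _ (filter_and (F := F) _ _ HA HB) (filter_and (F := F) _ _ HK (Cg e1 Pe1)))).
  apply filter_imp; intros x [[A B] [[C D] [E G]]].
  set (rf := Cminus (Cminus (f x) (a x)) (Cmult (d x) (Cmult (a x) (K1 x)))) in A.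
  set (rg := Cminus (Cminus (g x) (b x)) (Cmult (d x) (Cmult (b x) (K2 x)))) in B.
  replace (Cminus (Cminus (Cmult (f x) (g x)) (Cmult (a x) (b x)))
             (Cmult (d x) (Cmult (Cmult (a x) (b x)) (Cplus (K1 x) (K2 x)))))
    with (Cplus (Cplus (Cmult rf (g x)) (Cmult (a x) rg))
                (Cmult (Cmult (Cmult (d x) (a x)) (K1 x)) (Cminus (g x) (b x))))
    by (unfold rf, rg; ring).
  assert (Hg : Cmod (g x) <= Mb + 1).
  { pose proof (Cmod_sub_ge (g x) (b x)); lra. }
  eapply Rle_trans; [apply Cmod_triangle|].
  eapply Rle_trans; [apply Rplus_le_compat_r, Cmod_triangle|]; rewrite !Cmod_mult.
  pose proof (Cmod_ge_0 (d x)); pose proof (Cmod_ge_0 (a x)); pose proof (Cmod_ge_0 (K1 x)).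
  pose proof (Cmod_ge_0 (g x)); pose proof (Cmod_ge_0 (Cminus (g x) (b x))).
  pose proof (Cmod_ge_0 rf); pose proof (Cmod_ge_0 rg).
  assert (Cmod rf * Cmod (g x) <= e1 * Cmod (d x) * (Mb + 1)) by (apply Rmult_le_compat; lra).
  assert (Cmod (a x) * Cmod rg <= Ma * (e1 * Cmod (d x))) by (apply Rmult_le_compat; lra).
  assert (Cmod (a x) * Cmod (K1 x) <= Ma * Mk) by (apply Rmult_le_compat; lra).
  assert (Cmod (d x) * Cmod (a x) * Cmod (K1 x) * Cmod (Cminus (g x) (b x)) <= Cmod (d x) * (Ma * Mk) * e1).
  { apply Rmult_le_compat;
      [apply Rmult_le_pos; [apply Rmult_le_pos|] | | rewrite Rmult_assoc; apply Rmult_le_compat_l |]; lra. }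
  assert (e1 * K * Cmod (d x) <= eps * Cmod (d x)) by (apply Rmult_le_compat_r; lra).
  unfold K in *; nra.
Qed.

Lemma first_order_pow d f a K m :
  first_order d f a (fun x => Cmult (a x) (K x)) -> vanishing d -> ev_bounded a -> ev_bounded K ->
  first_order d (fun x => Cpow (f x) m) (fun x => Cpow (a x) m)
    (fun x => Cmult (Cpow (a x) m) (Cmult (RtoC (INR m)) (K x))).
Proof.
  intros H Hd Ba BK; induction m as [|m IH].
  - intros eps He; apply filter_forall; intros x; simpl Cpow.
    replace (Cminus (Cminus 1 1) (Cmult (d x) (Cmult 1 (Cmult (RtoC (INR 0)) (K x)))))
      with (RtoC 0) by (simpl; ring).
    rewrite Cmod_0; pose proof (Cmod_ge_0 (d x)); nra.
  - generalize (first_order_mul d f a K _ _ _ H IH Hd Ba (ev_bounded_pow a m Ba) BK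
      (ev_bounded_mul _ _ (ev_bounded_const _) BK)).
    apply first_order_ext; intros x; try reflexivity.
    rewrite S_INR, RtoC_plus; simpl Cpow; ring.
Qed.

Lemma first_order_inv d f a K :
  first_order d f a (fun x => Cmult (a x) (K x)) -> vanishing d ->
  ev_bounded_away a -> ev_bounded a -> ev_bounded K ->
  first_order d (fun x => Cinv (f x)) (fun x => Cinv (a x)) (fun x => Cmult (Cinv (a x)) (Copp (K x))).
Proof.
  intros H Hd La Ba BK.
  assert (Cf : tends f a) by (apply (first_order_tends d f a _ H Hd), ev_bounded_mul; auto).
  destruct La as [c [Pc HLa]], (ev_bounded_pos K BK) as [Mk [Pk HK]].
  intros eps Heps; set (q := c * c / 2); assert (Pq : 0 < q) by (unfold q; nra).
  destruct (small_scale (eps * q) (1 + Mk) (c/2) ltac:(nra) ltac:(lra) ltac:(lra)) as [e1 [Pe1 [Le1 Le2]]].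
  generalize (filter_and (F := F) _ _ (filter_and (F := F) _ _ (H e1 Pe1) (Cf e1 Pe1))
    (filter_and (F := F) _ _ HLa HK)).
  apply filter_imp; intros x [[A B] [C D]].
  pose proof (Cmod_sub_ge_r (a x) (f x)).
  assert (nf : f x <> 0%C) by (apply (Cmod_lb_neq_0 _ (c/2)); lra).
  assert (na : a x <> 0%C) by exact (Cmod_lb_neq_0 _ c Pc C).
  set (r := Cminus (Cminus (f x) (a x)) (Cmult (d x) (Cmult (a x) (K x)))) in A.
  replace (Cminus (Cminus (Cinv (f x)) (Cinv (a x))) (Cmult (d x) (Cmult (Cinv (a x)) (Copp (K x)))))
    with (Cmult (Cplus (Copp r) (Cmult (Cmult (d x) (K x)) (Cminus (f x) (a x))))
                (Cinv (Cmult (f x) (a x))))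
    by (unfold r; field; auto).
  assert (Hq : q <= Cmod (Cmult (f x) (a x))).
  { rewrite Cmod_mult; unfold q; pose proof (Cmod_ge_0 (a x)); nra. }
  eapply Rle_trans.
  { apply (Cmod_div_le _ _ (e1 * Cmod (d x) * (1 + Mk)) q Pq Hq).
    eapply Rle_trans; [apply Cmod_triangle|]; rewrite Cmod_opp, !Cmod_mult.
    pose proof (Cmod_ge_0 (d x)); pose proof (Cmod_ge_0 (K x));
      pose proof (Cmod_ge_0 (Cminus (f x) (a x))).
    assert (Cmod (d x) * Cmod (K x) * Cmod (Cminus (f x) (a x)) <= Cmod (d x) * Mk * e1).
    { apply Rmult_le_compat; [apply Rmult_le_pos | | apply Rmult_le_compat_l |]; lra. }
    nra. }
  apply Rmult_le_reg_r with q; [lra|].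
  unfold Rdiv; rewrite Rmult_assoc, Rinv_l by lra.
  pose proof (Cmod_ge_0 (d x)); nra.
Qed.

Lemma first_order_Cpowz d f a K n :
  first_order d f a (fun x => Cmult (a x) (K x)) -> vanishing d ->
  ev_bounded_away a -> ev_bounded a -> ev_bounded K ->
  first_order d (fun x => Cpowz (f x) n) (fun x => Cpowz (a x) n)
    (fun x => Cmult (Cpowz (a x) n) (Cmult (RtoC (IZR n)) (K x))).
Proof.
  intros H Hd La Ba BK; destruct n as [|p|p]; simpl.
  - intros eps He; apply filter_forall; intros x.
    replace (Cminus (Cminus 1 1) (Cmult (d x) (Cmult 1 (Cmult (RtoC 0) (K x))))) with (RtoC 0) by ring.
    rewrite Cmod_0; pose proof (Cmod_ge_0 (d x)); nra.
  - generalize (first_order_pow d f a K (Pos.to_nat p) H Hd Ba BK).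
    apply first_order_ext; intros x; auto; rewrite INR_IPR; reflexivity.
  - generalize (first_order_inv d _ _ _ (first_order_pow d f a K (Pos.to_nat p) H Hd Ba BK) Hd
      (ev_bounded_away_pow a _ La) (ev_bounded_pow a _ Ba)
      (ev_bounded_mul _ _ (ev_bounded_const _) BK)).
    apply first_order_ext; intros x; auto.
    rewrite INR_IPR, IZR_NEG; unfold IZR; rewrite RtoC_opp; ring.
Qed.

(* For a square root [f] of [g]: [f - a = (f^2 - a^2) / (f + a)], and [f + a] stays away from [0]. *)
Lemma first_order_sqrt d f a g b K :
  F (fun x => Cmult (f x) (f x) = g x) -> (forall x, Cmult (a x) (a x) = b x) ->
  first_order d g b (fun x => Cmult (b x) (K x)) -> tends f a ->
  ev_bounded_away a -> ev_bounded a -> ev_bounded K ->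
  first_order d f a (fun x => Cmult (a x) (Cmult (K x) (RtoC (/2)))).
Proof.
  intros Hsq Hb Hg Cf [c [Pc HL]] Ba BK.
  destruct (ev_bounded_pos a Ba) as [Ma [Pa HA]], (ev_bounded_pos K BK) as [Mk [Pk HK]].
  intros eps Heps; set (Q := 1 + Ma * Mk); assert (PQ : 0 < Q) by (unfold Q; nra).
  destruct (small_scale (eps * c) Q c ltac:(nra) PQ Pc) as [e1 [Pe1 [Le1 Le2]]].
  generalize (filter_and (F := F) _ _ (filter_and (F := F) _ _ (Hg e1 Pe1) (Cf e1 Pe1))
    (filter_and (F := F) _ _ (filter_and (F := F) _ _ HL Hsq) (filter_and (F := F) _ _ HA HK))).
  apply filter_imp; intros x [[A B] [[C E] [G I]]].
  rewrite <- E, <- Hb in A.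
  assert (Hs : c <= Cmod (Cplus (f x) (a x))).
  { pose proof (Cmod_sub_ge (Cmult 2 (a x)) (Cplus (f x) (a x))).
    replace (Cminus (Cmult 2 (a x)) (Cplus (f x) (a x))) with (Copp (Cminus (f x) (a x))) in H by ring.
    rewrite Cmod_opp, Cmod_mult, Cmod_R, Rabs_pos_eq in H by lra; lra. }
  assert (ns : Cplus (f x) (a x) <> 0%C) by exact (Cmod_lb_neq_0 _ c Pc Hs).
  set (r := Cminus (Cminus (Cmult (f x) (f x)) (Cmult (a x) (a x)))
                   (Cmult (d x) (Cmult (Cmult (a x) (a x)) (K x)))) in A.
  replace (Cminus (Cminus (f x) (a x)) (Cmult (d x) (Cmult (a x) (Cmult (K x) (RtoC (/ 2))))))
   with (Cmult (Cminus r (Cmult (Cmult (Cmult (d x) (a x)) (K x)) (Cmult (Cminus (f x) (a x)) (RtoC (/2)))))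
           (Cinv (Cplus (f x) (a x))))
   by (unfold r; rewrite RtoC_inv by lra; field; auto).
  eapply Rle_trans.
  { apply (Cmod_div_le _ _ (e1 * Cmod (d x) * Q) c Pc Hs).
    eapply Rle_trans; [apply Cmod_sub_le|]; rewrite !Cmod_mult, Cmod_R, Rabs_pos_eq by lra.
    pose proof (Cmod_ge_0 (d x)); pose proof (Cmod_ge_0 (K x)); pose proof (Cmod_ge_0 (a x));
      pose proof (Cmod_ge_0 (Cminus (f x) (a x))).
    assert (Cmod (d x) * Cmod (a x) * Cmod (K x) <= Cmod (d x) * (Ma * Mk)).
    { rewrite Rmult_assoc; apply Rmult_le_compat_l; [lra | apply Rmult_le_compat; lra]. }
    assert (Cmod (d x) * Cmod (a x) * Cmod (K x) * (Cmod (Cminus (f x) (a x)) * / 2)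
              <= Cmod (d x) * (Ma * Mk) * e1).
    { apply Rmult_le_compat; try lra; apply Rmult_le_pos; [apply Rmult_le_pos|]; lra. }
    unfold Q; nra. }
  apply Rmult_le_reg_r with c; [lra|].
  unfold Rdiv; rewrite Rmult_assoc, Rinv_l by lra.
  pose proof (Cmod_ge_0 (d x)); nra.
Qed.

Lemma first_order_Cprod d (f a K : nat -> X -> C) m : vanishing d ->
  (forall k, (k < m)%nat -> first_order d (f k) (a k) (fun x => Cmult (a k x) (K k x))
                          /\ ev_bounded (a k) /\ ev_bounded (K k)) ->
  first_order d (fun x => Cprod_lt m (fun k => f k x)) (fun x => Cprod_lt m (fun k => a k x))
     (fun x => Cmult (Cprod_lt m (fun k => a k x)) (Csum_lt m (fun k => K k x))).
Proof.
  intros Hd; induction m as [|m IH]; intros H; simpl.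
  - intros eps He; apply filter_forall; intros x.
    replace (Cminus (Cminus 1 1) (Cmult (d x) (Cmult 1 0))) with (RtoC 0) by ring.
    rewrite Cmod_0; pose proof (Cmod_ge_0 (d x)); nra.
  - assert (H1 : forall k, (k < m)%nat -> first_order d (f k) (a k) (fun x => Cmult (a k x) (K k x))
                          /\ ev_bounded (a k) /\ ev_bounded (K k)) by (intros; apply H; lia).
    destruct (H m ltac:(lia)) as [Hm [Bam BKm]].
    exact (first_order_mul d _ _ _ _ _ _ (IH H1) Hm Hd
       (ev_bounded_Cprod a m (fun k Hk => proj1 (proj2 (H1 k Hk)))) Bam
       (ev_bounded_Csum K m (fun k Hk => proj2 (proj2 (H1 k Hk)))) BKm).
Qed.

Lemma first_order_refl d b : first_order d b b (fun x => Cmult (b x) 0).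
Proof.
  intros eps He; apply filter_forall; intros x.
  replace (Cminus (Cminus (b x) (b x)) (Cmult (d x) (Cmult (b x) 0))) with (RtoC 0) by ring.
  rewrite Cmod_0; pose proof (Cmod_ge_0 (d x)); nra.
Qed.

End Asymptotics.

Lemma norm_C_R (z : C) : @norm R_AbsRing C_R_NormedModule z = Cmod z.
Proof.
  unfold norm; simpl; unfold prod_norm, Cmod; simpl; f_equal.
  change (Rabs (fst z) * (Rabs (fst z) * 1) + Rabs (snd z) * (Rabs (snd z) * 1)
          = fst z ^ 2 + snd z ^ 2).
  unfold Rabs; destruct (Rcase_abs (fst z)), (Rcase_abs (snd z)); ring.
Qed.

Lemma scal_C_R (k : R) (z : C) : @scal R_AbsRing C_R_NormedModule k z = Cmult (RtoC k) z.
Proof.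
  destruct z as [x y]; unfold scal; simpl; unfold prod_scal, Cmult, RtoC; simpl.
  change (scal k x) with (k * x); change (scal k y) with (k * y); f_equal; ring.
Qed.

Lemma sqrt2_lt_2 : sqrt 2 < 2.
Proof.
  rewrite <- (sqrt_square 2) at 2 by lra.
  apply sqrt_lt_1; lra.
Qed.

Definition near_R (t : R) : (R -> Prop) -> Prop :=
  fun P => exists d, 0 < d /\ forall s, Rabs (s - t) < d -> P s.

Global Instance near_R_filter t : Filter (near_R t).
Proof.
  constructor.
  - exists 1; split; [lra | auto].
  - intros P Q [d1 [P1 H1]] [d2 [P2 H2]]; exists (Rmin d1 d2); split; [apply Rmin_pos; auto|].
    intros s Hs; pose proof (Rmin_l d1 d2); pose proof (Rmin_r d1 d2); split;
      [apply H1 | apply H2]; lra.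
  - intros P Q HPQ [d [Pd H]]; exists d; split; auto.
Qed.

Lemma vanishing_near_R t : vanishing (near_R t) (fun s => RtoC (s - t)).
Proof. intros e He; exists e; split; auto; intros s Hs; rewrite Cmod_R; auto. Qed.

Lemma continuous_of_tends (f : R -> C) t :
  tends (near_R t) f (fun _ => f t) -> @continuous R_UniformSpace C_R_NormedModule f t.
Proof.
  intros H; apply filterlim_locally; intros eps.
  destruct (H eps (cond_pos eps)) as [d [Pd Hd]].
  exists (mkposreal d Pd); intros y Hy; apply C_NormedModule_mixin_compat1, Hd, Hy.
Qed.

Lemma tends_of_continuous (f : R -> C) t :
  @continuous R_UniformSpace C_R_NormedModule f t -> tends (near_R t) f (fun _ => f t).
Proof.
  intros H e He; unfold continuous in H; rewrite filterlim_locally in H.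
  destruct (H (mkposreal (e/2) ltac:(lra))) as [d Hd]; exists d; split; [apply cond_pos|].
  intros s Hs; specialize (Hd s Hs); apply C_NormedModule_mixin_compat2 in Hd; simpl in Hd.
  pose proof sqrt2_lt_2; apply Rlt_trans with (sqrt 2 * (e/2)); [exact Hd | nra].
Qed.

Lemma is_derive_of_first_order (f : R -> C) t l :
  first_order (near_R t) (fun s => RtoC (s - t)) f (fun _ => f t) (fun _ => l) ->
  @is_derive R_AbsRing C_R_NormedModule f t l.
Proof.
  intros H; split; [apply is_linear_scal_l|].
  intros x Hx; apply (@is_filter_lim_locally_unique R_AbsRing R_NormedModule) in Hx; subst x.
  intros eps; destruct (H eps (cond_pos eps)) as [d [Pd Hd]].
  exists (mkposreal d Pd); intros y Hy; rewrite !norm_C_R, scal_C_R.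
  change (Rabs (y - t) < d) in Hy; specialize (Hd y Hy); rewrite Cmod_R in Hd; exact Hd.
Qed.

Lemma first_order_of_is_derive (f : R -> C) t l :
  @is_derive R_AbsRing C_R_NormedModule f t l ->
  first_order (near_R t) (fun s => RtoC (s - t)) f (fun _ => f t) (fun _ => l).
Proof.
  intros [_ H] eps Heps; destruct (H t (fun P HP => HP) (mkposreal eps Heps)) as [d Hd].
  exists d; split; [apply cond_pos|]; intros s Hs; specialize (Hd s Hs).
  rewrite !norm_C_R, scal_C_R in Hd; rewrite Cmod_R; exact Hd.
Qed.

Lemma filterlim_locally'_0_C (q : C -> C) (L : C) :
  (forall eps, 0 < eps -> exists d, 0 < d /\
     forall h : C, h <> 0%C -> Cmod h < d -> Cmod (Cminus (q h) L) <= eps) ->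
  filterlim q (@locally' C_UniformSpace (RtoC 0)) (@locally C_UniformSpace L).
Proof.
  intros H; apply filterlim_locally; intros [eps Peps]; simpl.
  destruct (H (eps/2) ltac:(lra)) as [d [Pd Hd]]; pose proof sqrt2_lt_2.
  exists (mkposreal (d/2) ltac:(lra)); intros h Hh Hn.
  apply C_NormedModule_mixin_compat1; eapply Rle_lt_trans; [apply Hd; auto | lra].
  pose proof (C_NormedModule_mixin_compat2 (RtoC 0) h _ Hh) as Hh'; simpl in Hh'.
  replace (@minus (NormedModuleAux.AbelianGroup C_AbsRing C_NormedModuleAux) h (RtoC 0)) with h in Hh'
    by (destruct h as [x y]; unfold minus, plus, opp, zero; simpl; unfold Cplus, Copp; simpl; f_equal; ring).
  nra.
Qed.

Lemma is_RInt_Cmult_l (f : R -> C) a b (l c : C) :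
  @is_RInt C_R_NormedModule f a b l -> @is_RInt C_R_NormedModule (fun t => Cmult c (f t)) a b (Cmult c l).
Proof.
  intros H.
  assert (H1 : is_RInt (V := R_NormedModule) (fun t => fst (f t)) a b (fst l))
    by exact (is_RInt_fct_extend_fst (U := R_NormedModule) (V := R_NormedModule) _ _ _ _ H).
  assert (H2 : is_RInt (V := R_NormedModule) (fun t => snd (f t)) a b (snd l))
    by exact (is_RInt_fct_extend_snd (U := R_NormedModule) (V := R_NormedModule) _ _ _ _ H).
  destruct c as [cr ci].
  replace (Cmult (cr, ci) l) with (cr * fst l - ci * snd l, cr * snd l + ci * fst l)
    by (destruct l; reflexivity).
  apply (is_RInt_fct_extend_pair (U := R_NormedModule) (V := R_NormedModule)).
  - eapply is_RInt_ext;
      [| exact (is_RInt_minus _ _ _ _ _ _ (is_RInt_scal _ _ _ cr _ H1) (is_RInt_scal _ _ _ ci _ H2))].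
    intros x _; unfold minus, plus, opp, scal; simpl; unfold mult; simpl; destruct (f x); simpl; ring.
  - eapply is_RInt_ext;
      [| exact (is_RInt_plus _ _ _ _ _ _ (is_RInt_scal _ _ _ cr _ H2) (is_RInt_scal _ _ _ ci _ H1))].
    intros x _; unfold minus, plus, opp, scal; simpl; unfold mult; simpl; destruct (f x); simpl; ring.
Qed.

Lemma is_RInt_Csum (f : nat -> R -> C) a b m :
  (forall i, (i < m)%nat -> ex_RInt (V := C_R_CompleteNormedModule) (f i) a b) ->
  is_RInt (V := C_R_NormedModule) (fun t => Csum_lt m (fun i => f i t)) a b
    (Csum_lt m (fun i => RInt (V := C_R_CompleteNormedModule) (f i) a b)).
Proof.
  induction m as [|m IH]; intros H; simpl.
  - pose proof (is_RInt_const (V := C_R_NormedModule) a b (RtoC 0)) as H0.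
    rewrite scal_C_R in H0; replace (Cmult (RtoC (b - a)) (RtoC 0)) with (RtoC 0) in H0 by ring.
    exact H0.
  - apply (is_RInt_plus (V := C_R_NormedModule)); [apply IH; intros; apply H; lia|].
    apply (RInt_correct (V := C_R_CompleteNormedModule)), H; lia.
Qed.

Lemma Cmod_RInt_le (f : R -> C) a b M : a <= b -> ex_RInt (V := C_R_CompleteNormedModule) f a b ->
  (forall x, a <= x <= b -> Cmod (f x) <= M) ->
  Cmod (RInt (V := C_R_CompleteNormedModule) f a b) <= (b - a) * M.
Proof.
  intros Hab Hex H; rewrite <- norm_C_R.
  apply (norm_RInt_le_const (V := C_R_NormedModule) f a b); auto.
  - intros x Hx; rewrite norm_C_R; auto.
  - apply (RInt_correct (V := C_R_CompleteNormedModule)); auto.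
Qed.

Lemma RInt_Chasles3 (f : R -> C) a b c d : (forall x y, ex_RInt (V := C_R_CompleteNormedModule) f x y) ->
  RInt (V := C_R_CompleteNormedModule) f a d =
  Cplus (Cplus (RInt (V := C_R_CompleteNormedModule) f a b) (RInt (V := C_R_CompleteNormedModule) f b c))
        (RInt (V := C_R_CompleteNormedModule) f c d).
Proof.
  intros Hex.
  rewrite <- (RInt_Chasles (V := C_R_CompleteNormedModule) f a c d),
    <- (RInt_Chasles (V := C_R_CompleteNormedModule) f a b c) by auto.
  reflexivity.
Qed.

Lemma Cmod_le_all_eq_0 (z : C) : (forall eps, 0 < eps -> Cmod z <= eps) -> z = 0%C.
Proof.
  intros H; apply Cmod_eq_0, Rle_antisym; [| apply Cmod_ge_0].
  destruct (Rle_lt_dec (Cmod z) 0) as [L | L]; auto.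
  specialize (H (Cmod z / 2) ltac:(lra)); lra.
Qed.

Definition clamp01 (t : R) := Rmax 0 (Rmin 1 t).

Lemma clamp01_in t : 0 <= clamp01 t <= 1.
Proof. unfold clamp01, Rmax, Rmin; repeat destruct Rle_dec; lra. Qed.

Lemma clamp01_id t : 0 <= t <= 1 -> clamp01 t = t.
Proof. unfold clamp01, Rmax, Rmin; repeat destruct Rle_dec; lra. Qed.

Lemma clamp01_lipschitz s t : Rabs (clamp01 s - clamp01 t) <= Rabs (s - t).
Proof. unfold clamp01, Rmax, Rmin; repeat destruct Rle_dec; unfold Rabs; repeat destruct Rcase_abs; lra. Qed.

Lemma tends_clamp01 (f : R -> C) s :
  tends (near_R (clamp01 s)) f (fun _ => f (clamp01 s)) ->
  tends (near_R s) (fun r => f (clamp01 r)) (fun _ => f (clamp01 s)).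
Proof.
  intros H e He; destruct (H e He) as [d [Pd Hd]]; exists d; split; auto.
  intros r Hr; apply Hd; eapply Rle_lt_trans; [apply clamp01_lipschitz | exact Hr].
Qed.

(* Continuity of [f] on [0, 1], encoded as continuity on R of its extension [f o clamp01]. *)
Definition continuous_on01 (f : R -> C) :=
  forall s, tends (near_R s) (fun r => f (clamp01 r)) (fun _ => f (clamp01 s)).

Lemma continuity_pt_Cmod_clamp01 (f : R -> C) s :
  continuous_on01 f -> continuity_pt (fun t => Cmod (f (clamp01 t))) s.
Proof.
  intros H e He; destruct (H s e He) as [d [Pd Hd]]; exists d; split; auto.
  intros x [_ Hx]; simpl; unfold R_dist in *.
  pose proof (Cmod_sub_ge (f (clamp01 x)) (f (clamp01 s))).
  pose proof (Cmod_sub_ge_r (f (clamp01 s)) (f (clamp01 x))); specialize (Hd x Hx).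
  unfold Rabs; destruct Rcase_abs; lra.
Qed.

Lemma bounded_on01 (f : R -> C) : continuous_on01 f ->
  exists M, 0 < M /\ forall t, 0 <= t <= 1 -> Cmod (f t) <= M.
Proof.
  intros H; destruct (continuity_ab_maj (fun t => Cmod (f (clamp01 t))) 0 1 ltac:(lra)) as [x [HM _]].
  { intros c _; apply continuity_pt_Cmod_clamp01, H. }
  exists (Cmod (f (clamp01 x)) + 1); split; [pose proof (Cmod_ge_0 (f (clamp01 x))); lra|].
  intros t Ht; specialize (HM t Ht); simpl in HM; rewrite (clamp01_id t) in HM by exact Ht; lra.
Qed.

Lemma bounded_away_on01 (f : R -> C) : continuous_on01 f -> (forall t, 0 <= t <= 1 -> f t <> 0%C) ->
  exists c, 0 < c /\ forall t, 0 <= t <= 1 -> c <= Cmod (f t).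
Proof.
  intros H Hn; destruct (continuity_ab_min (fun t => Cmod (f (clamp01 t))) 0 1 ltac:(lra)) as [x [Hm Hx]].
  { intros c _; apply continuity_pt_Cmod_clamp01, H. }
  exists (Cmod (f (clamp01 x))); split; [apply Cmod_gt_0, Hn, clamp01_in|].
  intros t Ht; specialize (Hm t Ht); rewrite (clamp01_id t) in Hm by exact Ht; exact Hm.
Qed.

Definition continuous_within01_at (G : R -> C) (t : R) :=
  forall e, 0 < e -> exists d, 0 < d /\
    forall s, 0 <= s <= 1 -> Rabs (s - t) < d -> Cmod (Cminus (G s) (G t)) < e.

(* [v] is differentiable in [t] only on the open interval (0, 1), where [v^2] determines it. *)
Lemma RInt_01_primitive_interior (f G : R -> C) (M : R) :
  (forall a b, ex_RInt (V := C_R_CompleteNormedModule) f a b) ->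
  (forall x, 0 <= x <= 1 -> Cmod (f x) <= M) ->
  (forall a b, 0 < a -> a <= b -> b < 1 ->
     RInt (V := C_R_CompleteNormedModule) f a b = Cminus (G b) (G a)) ->
  continuous_within01_at G 0 -> continuous_within01_at G 1 ->
  RInt (V := C_R_CompleteNormedModule) f 0 1 = Cminus (G 1) (G 0).
Proof.
  intros Hex HM HG C0 C1.
  assert (PM : 0 <= M) by (pose proof (Cmod_ge_0 (f 0)); specialize (HM 0 ltac:(lra)); lra).
  apply Ceq_minus.
  apply Cmod_le_all_eq_0; intros eps Heps.
  destruct (C0 (eps/4) ltac:(lra)) as [d0 [Pd0 H0]], (C1 (eps/4) ltac:(lra)) as [d1 [Pd1 H1]].
  destruct (small_scale (eps/4) (M + 1) (Rmin (1/4) (d0/2)) ltac:(lra) ltac:(lra)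
    ltac:(apply Rmin_pos; lra)) as [a [Pa [Ha HaM]]].
  destruct (small_scale (eps/4) (M + 1) (Rmin (1/4) (d1/2)) ltac:(lra) ltac:(lra)
    ltac:(apply Rmin_pos; lra)) as [c [Pc [Hc HcM]]].
  pose proof (Rmin_l (1/4) (d0/2)); pose proof (Rmin_r (1/4) (d0/2)).
  pose proof (Rmin_l (1/4) (d1/2)); pose proof (Rmin_r (1/4) (d1/2)).
  rewrite (RInt_Chasles3 f 0 a (1 - c) 1 Hex), (HG a (1 - c)) by lra.
  assert (B0 : Cmod (RInt (V := C_R_CompleteNormedModule) f 0 a) <= (a - 0) * M)
    by (apply Cmod_RInt_le; auto; [lra | intros x Hx; apply HM; lra]).
  assert (B1 : Cmod (RInt (V := C_R_CompleteNormedModule) f (1 - c) 1) <= (1 - (1 - c)) * M)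
    by (apply Cmod_RInt_le; auto; [lra | intros x Hx; apply HM; lra]).
  assert (W0 : Cmod (Cminus (G a) (G 0)) < eps/4).
  { apply H0; [lra | rewrite Rminus_0_r, Rabs_pos_eq; lra]. }
  assert (W1 : Cmod (Cminus (G (1 - c)) (G 1)) < eps/4).
  { apply H1; [lra | replace (1 - c - 1) with (- c) by ring; rewrite Rabs_Ropp, Rabs_pos_eq; lra]. }
  replace (Cminus (Cplus (Cplus (RInt (V := C_R_CompleteNormedModule) f 0 a) (Cminus (G (1 - c)) (G a)))
                         (RInt (V := C_R_CompleteNormedModule) f (1 - c) 1)) (Cminus (G 1) (G 0)))
    with (Cplus (Cplus (RInt (V := C_R_CompleteNormedModule) f 0 a)
                       (Cminus (Cminus (G (1 - c)) (G 1)) (Cminus (G a) (G 0))))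
                (RInt (V := C_R_CompleteNormedModule) f (1 - c) 1)) by ring.
  eapply Rle_trans; [apply Cmod_triangle|].
  eapply Rle_trans; [apply Rplus_le_compat_r, Cmod_triangle|].
  pose proof (Cmod_sub_le (Cminus (G (1 - c)) (G 1)) (Cminus (G a) (G 0))).
  nra.
Qed.

Lemma Cprod_lt_neq_0 m (f : nat -> C) : (forall k, (k < m)%nat -> f k <> 0%C) -> Cprod_lt m f <> 0%C.
Proof.
  induction m as [|m IH]; intros H; simpl.
  - intro E; injection E; lra.
  - apply Cmult_neq_0; [apply IH; intros; apply H | apply H]; lia.
Qed.

Lemma Csum_lt_ext m (f g : nat -> C) : (forall k, (k < m)%nat -> f k = g k) -> Csum_lt m f = Csum_lt m g.
Proof. induction m; intros H; simpl; auto; f_equal; [apply IHm; intros | ]; apply H; lia. Qed.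

Lemma Cprod_lt_ext m (f g : nat -> C) : (forall k, (k < m)%nat -> f k = g k) -> Cprod_lt m f = Cprod_lt m g.
Proof. induction m; intros H; simpl; auto; f_equal; [apply IHm; intros | ]; apply H; lia. Qed.

Lemma Cmult_Csum_lt c m (f : nat -> C) : Cmult c (Csum_lt m f) = Csum_lt m (fun k => Cmult c (f k)).
Proof. induction m; simpl; [ring | rewrite <- IHm; ring]. Qed.

Lemma Cprod_lt_replace m j (c c' : nat -> C) : (forall k, k <> j -> c' k = c k) -> (j < m)%nat ->
  Cmult (Cprod_lt m c') (c j) = Cmult (Cprod_lt m c) (c' j).
Proof.
  intros Hc; induction m as [|m IH]; intros Hj; [lia | simpl].
  destruct (Nat.eq_dec m j) as [E | E].
  - subst m; rewrite (Cprod_lt_ext j c' c) by (intros k Hk; apply Hc; lia); ring.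
  - rewrite (Hc m) by auto.
    transitivity (Cmult (Cmult (Cprod_lt m c') (c j)) (c m)); [ring|].
    rewrite IH by lia; ring.
Qed.

Lemma close_lt_refl N U d : 0 < d -> close_lt N U U d.
Proof. intros Hd k _; replace (Cminus (U k) (U k)) with (RtoC 0) by ring; rewrite Cmod_0; auto. Qed.

Lemma close_lt_shift_coord N U j (h : C) e : Cmod h < e -> close_lt N U (shift_coord U j h) e.
Proof.
  intros H k _; unfold shift_coord; destruct (Nat.eqb k j).
  - replace (Cminus (Cplus (U k) h) (U k)) with h by ring; auto.
  - replace (Cminus (U k) (U k)) with (RtoC 0) by ring; rewrite Cmod_0; pose proof (Cmod_ge_0 h); lra.
Qed.

Lemma shift_coord_other U j h k : k <> j -> shift_coord U j h k = U k.
Proof. intros Hk; unfold shift_coord; apply Nat.eqb_neq in Hk; rewrite Hk; reflexivity. Qed.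

Lemma Cprod_lt_shift_coord m U j (h z : C) : (j < m)%nat -> Cminus z (U j) <> 0%C ->
  Cprod_lt m (fun k => Cminus z (shift_coord U j h k)) =
  Cmult (Cprod_lt m (fun k => Cminus z (U k))) (Cminus 1 (Cdiv h (Cminus z (U j)))).
Proof.
  intros Hj Hz.
  assert (E : Cmult (Cprod_lt m (fun k => Cminus z (shift_coord U j h k))) (Cminus z (U j)) =
              Cmult (Cprod_lt m (fun k => Cminus z (U k))) (Cminus z (Cplus (U j) h))).
  { rewrite (Cprod_lt_replace m j (fun k => Cminus z (U k)) (fun k => Cminus z (shift_coord U j h k))); auto.
    - unfold shift_coord; rewrite Nat.eqb_refl; reflexivity.
    - intros k Hk; rewrite shift_coord_other; auto. }
  transitivity (Cmult (Cmult (Cprod_lt m (fun k => Cminus z (shift_coord U j h k))) (Cminus z (U j)))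
                      (Cinv (Cminus z (U j)))); [field; auto|].
  rewrite E; field; auto.
Qed.

Lemma first_order_Cprod_shift_coord {X : Type} (F : (X -> Prop) -> Prop) {FF : Filter F}
  m U j (h z : X -> C) : (j < m)%nat -> (forall x, Cminus (z x) (U j) <> 0%C) ->
  first_order F h (fun x => Cprod_lt m (fun k => Cminus (z x) (shift_coord U j (h x) k)))
    (fun x => Cprod_lt m (fun k => Cminus (z x) (U k)))
    (fun x => Cmult (Cprod_lt m (fun k => Cminus (z x) (U k))) (Copp (Cinv (Cminus (z x) (U j))))).
Proof.
  intros Hj Hz e He; apply filter_forall; intros x.
  rewrite Cprod_lt_shift_coord by auto.
  match goal with |- Cmod ?r <= _ => replace r with (RtoC 0) by (field; auto) end.
  rewrite Cmod_0; pose proof (Cmod_ge_0 (h x)); nra.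
Qed.

Definition small_shift : (C * R -> Prop) -> Prop := fun P => exists d, 0 < d /\
  forall (h : C) t, h <> 0%C -> Cmod h < d -> 0 <= t <= 1 -> P (h, t).

Global Instance small_shift_filter : Filter small_shift.
Proof.
  constructor.
  - exists 1; split; [lra | auto].
  - intros P Q [d1 [P1 H1]] [d2 [P2 H2]]; exists (Rmin d1 d2); split; [apply Rmin_pos; auto|].
    intros h t Hh Hd Ht; pose proof (Rmin_l d1 d2); pose proof (Rmin_r d1 d2); split;
      [apply H1 | apply H2]; auto; lra.
  - intros P Q HPQ [d [Pd H]]; exists d; split; auto.
Qed.

Lemma vanishing_small_shift : vanishing small_shift fst.
Proof. intros e He; exists e; split; auto. Qed.

Lemma ev_bounded_small_shift (f : R -> C) : continuous_on01 f ->
  ev_bounded small_shift (fun x => f (clamp01 (snd x))).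
Proof.
  intros H; destruct (bounded_on01 f H) as [M [_ HM]].
  exists M; apply filter_forall; intros x; apply HM, clamp01_in.
Qed.

Lemma ev_bounded_away_small_shift (f : R -> C) : continuous_on01 f ->
  (forall t, 0 <= t <= 1 -> f t <> 0%C) -> ev_bounded_away small_shift (fun x => f (clamp01 (snd x))).
Proof.
  intros H Hn; destruct (bounded_away_on01 f H Hn) as [c [Pc Hc]].
  exists c; split; auto; apply filter_forall; intros x; apply Hc, clamp01_in.
Qed.

Section Cycle_integrals.
Variables (N : nat) (n : Z) (Om : (nat -> C) -> Prop) (gamma gamma' : R -> C)
  (V : (nat -> C) -> R -> C).
Hypothesis hn : n <> 0%Z.
Hypothesis hOm : open_CN N Om.
Hypothesis hdist : forall U, Om U -> forall i j, (i < N)%nat -> (j < N)%nat -> i <> j -> U i <> U j.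
Hypothesis hgd : forall t, is_derive (V := C_R_NormedModule) gamma t (gamma' t).
Hypothesis hgc : forall t, continuous gamma' t.
Hypothesis havoid : forall U, Om U -> forall t, 0 <= t <= 1 -> forall k, (k < N)%nat -> gamma t <> U k.
Hypothesis hVcurve : forall U, Om U -> forall t, 0 <= t <= 1 ->
  Cmult (V U t) (V U t) = Cprod_lt N (fun k => Cminus (gamma t) (U k)).
Hypothesis hVclosed : forall U, Om U -> V U 0 = V U 1.
Hypothesis hVcont : jointly_continuous_on N Om V.

Definition form (U : nat -> C) (i : nat) (t : R) : C :=
  Cdiv (Cmult (Cpowz (V U t) n) (gamma' t)) (Cminus (gamma t) (U i)).

Lemma a_coef_RInt_clamp01 U i :
  a_coef n gamma gamma' V i U = RInt (V := C_R_CompleteNormedModule) (fun t => form U i (clamp01 t)) 0 1.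
Proof.
  apply (RInt_ext (V := C_R_CompleteNormedModule)); intros x Hx.
  rewrite Rmin_left, Rmax_right in Hx by lra; rewrite clamp01_id by lra; reflexivity.
Qed.

Lemma gamma_sub_neq_0 U k : Om U -> (k < N)%nat -> forall t, 0 <= t <= 1 -> Cminus (gamma t) (U k) <> 0%C.
Proof. intros HU Hk t Ht; apply Cminus_eq_contra, havoid; auto. Qed.

Lemma V_neq_0 U : Om U -> forall t, 0 <= t <= 1 -> V U t <> 0%C.
Proof.
  intros HU t Ht E.
  apply (Cprod_lt_neq_0 N (fun k => Cminus (gamma t) (U k))); [intros k Hk; apply gamma_sub_neq_0; auto|].
  rewrite <- hVcurve, E by auto; ring.
Qed.

Lemma V_continuous_on01 U : Om U -> continuous_on01 (V U).
Proof.
  intros HU s e He; destruct (hVcont U (clamp01 s) HU (clamp01_in s) e He) as [d [Pd Hd]].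
  exists d; split; auto; intros r Hr.
  apply Hd; auto using clamp01_in, close_lt_refl.
  eapply Rle_lt_trans; [apply clamp01_lipschitz | exact Hr].
Qed.

Lemma gamma_continuous s : tends (near_R s) gamma (fun _ => gamma s).
Proof. apply tends_of_continuous, ex_derive_continuous; exists (gamma' s); apply hgd. Qed.

Lemma gamma_sub_continuous_on01 c : continuous_on01 (fun t => Cminus (gamma t) c).
Proof.
  intros s; apply (tends_sub_const (near_R s) (fun r => gamma (clamp01 r)) (fun _ => gamma (clamp01 s))).
  apply tends_clamp01, gamma_continuous.
Qed.

Lemma gamma'_continuous_on01 : continuous_on01 gamma'.
Proof. intros s; apply tends_clamp01, tends_of_continuous, hgc. Qed.

Lemma form_continuous_on01 U i : Om U -> (i < N)%nat -> continuous_on01 (form U i).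
Proof.
  intros HU Hi s; unfold form, Cdiv.
  pose proof (V_neq_0 U HU _ (clamp01_in s)); pose proof (gamma_sub_neq_0 U i HU Hi _ (clamp01_in s)).
  apply (tends_mul (near_R s)); try exact (ev_bounded_const _ _).
  - apply (tends_mul (near_R s)); try exact (ev_bounded_const _ _).
    + apply (tends_Cpowz (near_R s)); [apply V_continuous_on01 | apply (ev_bounded_away_const (near_R s))
        | apply (ev_bounded_const (near_R s))]; auto.
    + apply gamma'_continuous_on01.
  - apply (tends_inv (near_R s)); [apply gamma_sub_continuous_on01 | apply (ev_bounded_away_const (near_R s)); auto].
Qed.

Lemma ex_RInt_form U i : Om U -> (i < N)%nat ->
  forall a b, ex_RInt (V := C_R_CompleteNormedModule) (fun t => form U i (clamp01 t)) a b.
Proof.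
  intros HU Hi a b; apply ex_RInt_continuous; intros z _.
  apply continuous_of_tends, form_continuous_on01; auto.
Qed.

Lemma Vpow_continuous_within01 U t : Om U -> 0 <= t <= 1 ->
  continuous_within01_at (fun s => Cpowz (V U s) n) t.
Proof.
  intros HU Ht e He.
  assert (C : tends (near_R t) (fun r => Cpowz (V U (clamp01 r)) n) (fun _ => Cpowz (V U (clamp01 t)) n)).
  { apply (tends_Cpowz (near_R t)); [apply V_continuous_on01; auto
      | apply (ev_bounded_away_const (near_R t)), V_neq_0, clamp01_in; auto
      | apply (ev_bounded_const (near_R t))]. }
  destruct (C e He) as [d [Pd Hd]]; exists d; split; auto; intros s Hs Hst.
  specialize (Hd s Hst); rewrite !clamp01_id in Hd by auto; exact Hd.
Qed.

Definition dVpow (U : nat -> C) (t : R) : C :=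
  Cmult (RtoC (IZR n / 2)) (Csum_lt N (fun i => form U i t)).

Lemma dVpow_continuous_on01 U : Om U -> continuous_on01 (dVpow U).
Proof.
  intros HU s; unfold dVpow.
  apply (tends_mul (near_R s)); [apply (tends_const (near_R s)) | | apply (ev_bounded_const (near_R s)) ..].
  apply (tends_Csum (near_R s) (fun i r => form U i (clamp01 r)) (fun i _ => form U i (clamp01 s))).
  intros i Hi; apply form_continuous_on01; auto.
Qed.

Lemma Vpow_derive U : Om U -> forall t, 0 < t < 1 ->
  is_derive (V := C_R_NormedModule) (fun s => Cpowz (V U s) n) t (dVpow U t).
Proof.
  intros HU t Ht; assert (Ht' : 0 <= t <= 1) by lra.
  set (P := fun s => Cprod_lt N (fun k => Cminus (gamma s) (U k))).
  set (S := Csum_lt N (fun k => Cmult (gamma' t) (Cinv (Cminus (gamma t) (U k))))).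
  assert (nzV := V_neq_0 U HU t Ht').
  assert (DP : first_order (near_R t) (fun s => RtoC (s - t)) P (fun _ => P t) (fun _ => Cmult (P t) S)).
  { apply (first_order_Cprod (near_R t) _ (fun k s => Cminus (gamma s) (U k))
      (fun k _ => Cminus (gamma t) (U k)) (fun k _ => Cmult (gamma' t) (Cinv (Cminus (gamma t) (U k)))));
      [apply vanishing_near_R|].
    intros k Hk; split; [| split; apply (ev_bounded_const (near_R t))].
    apply (first_order_ext (near_R t) _ (fun s => Cminus (gamma s) (U k)) (fun _ => Cminus (gamma t) (U k))
      (fun _ => gamma' t)); try reflexivity.
    - intros x; field; apply gamma_sub_neq_0; auto.
    - apply (first_order_sub_const (near_R t) _ gamma (fun _ => gamma t)), first_order_of_is_derive, hgd. }
  set (dd := Rmin t (1 - t)); assert (Pdd : 0 < dd) by (apply Rmin_pos; lra).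
  assert (Hin : forall s, Rabs (s - t) < dd -> 0 <= s <= 1).
  { intros s Hs; assert (dd <= t) by apply Rmin_l; assert (dd <= 1 - t) by apply Rmin_r.
    unfold Rabs in Hs; destruct Rcase_abs in Hs; lra. }
  assert (Hsq : near_R t (fun s => Cmult (V U s) (V U s) = P s)).
  { exists dd; split; auto; intros s Hs; apply hVcurve; auto. }
  assert (CV : tends (near_R t) (V U) (fun _ => V U t)).
  { intros e He; destruct (hVcont U t HU Ht' e He) as [d [Pd Hd]].
    exists (Rmin d dd); split; [apply Rmin_pos; auto|]; intros s Hs.
    pose proof (Rmin_l d dd); pose proof (Rmin_r d dd).
    apply Hd; auto using close_lt_refl; [apply Hin|]; lra. }
  assert (DV := first_order_sqrt (near_R t) _ (V U) (fun _ => V U t) P (fun _ => P t) (fun _ => S)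
    Hsq (fun _ => hVcurve U HU t Ht') DP CV (ev_bounded_away_const (near_R t) _ nzV)
    (ev_bounded_const (near_R t) _) (ev_bounded_const (near_R t) _)).
  apply is_derive_of_first_order.
  generalize (first_order_Cpowz (near_R t) _ _ _ (fun _ => Cmult S (RtoC (/2))) n DV (vanishing_near_R t)
     (ev_bounded_away_const (near_R t) _ nzV) (ev_bounded_const (near_R t) _) (ev_bounded_const (near_R t) _)).
  apply (first_order_ext (near_R t)); intros x; try reflexivity.
  unfold dVpow, S.
  rewrite (Csum_lt_ext N (fun i => form U i t)
    (fun i => Cmult (Cpowz (V U t) n) (Cmult (gamma' t) (Cinv (Cminus (gamma t) (U i)))))) by
    (intros; unfold form, Cdiv; ring).
  rewrite <- (Cmult_Csum_lt (Cpowz (V U t) n)); unfold Rdiv; rewrite RtoC_mult; ring.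
Qed.

Lemma RInt_dVpow U : Om U -> RInt (V := C_R_CompleteNormedModule) (fun s => dVpow U (clamp01 s)) 0 1 = RtoC 0.
Proof.
  intros HU.
  destruct (bounded_on01 _ (dVpow_continuous_on01 U HU)) as [M [_ HM]].
  assert (Hc : forall s, @continuous R_UniformSpace C_R_NormedModule (fun r => dVpow U (clamp01 r)) s)
    by (intros; apply continuous_of_tends, dVpow_continuous_on01; auto).
  rewrite (RInt_01_primitive_interior _ (fun s => Cpowz (V U s) n) M).
  - rewrite hVclosed by auto; apply Cplus_opp_r.
  - intros a b; apply ex_RInt_continuous; intros; apply Hc.
  - intros x Hx; rewrite clamp01_id by auto; auto.
  - intros a b Ha Hab Hb; apply is_RInt_unique.
    apply (is_RInt_derive (V := C_R_CompleteNormedModule) (fun s => Cpowz (V U s) n)).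
    + intros x Hx; rewrite Rmin_left, Rmax_right in Hx by lra.
      rewrite clamp01_id by lra; apply Vpow_derive; auto; lra.
    + intros x _; apply Hc.
  - apply Vpow_continuous_within01; auto; lra.
  - apply Vpow_continuous_within01; auto; lra.
Qed.

Lemma Csum_a_coef U : Om U -> Csum_lt N (fun i => a_coef n gamma gamma' V i U) = RtoC 0.
Proof.
  intros HU; set (S := Csum_lt N (fun i => a_coef n gamma gamma' V i U)).
  assert (Hn2 : RtoC (IZR n / 2) <> 0%C) by (intro E; injection E; intros; apply hn, eq_IZR; lra).
  assert (E : is_RInt (V := C_R_NormedModule) (fun s => dVpow U (clamp01 s)) 0 1 (Cmult (RtoC (IZR n / 2)) S)).
  { unfold dVpow, S; apply is_RInt_Cmult_l.
    rewrite (Csum_lt_ext _ _ _ (fun i _ => a_coef_RInt_clamp01 U i)).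
    apply is_RInt_Csum; intros i Hi; apply ex_RInt_form; auto. }
  apply (is_RInt_unique (V := C_R_CompleteNormedModule)) in E; rewrite RInt_dVpow in E by auto.
  replace S with (Cmult (Cinv (RtoC (IZR n / 2))) (Cmult (RtoC (IZR n / 2)) S)) by (field; auto).
  rewrite <- E; ring.
Qed.

Lemma V_shift_tends U j : Om U ->
  tends small_shift (fun x => V (shift_coord U j (fst x)) (clamp01 (snd x))) (fun x => V U (clamp01 (snd x))).
Proof.
  intros HU eps Heps; destruct (hOm U HU) as [d0 [Pd0 Hd0]].
  assert (Hex : forall t, exists dl : posreal, 0 <= t <= 1 -> forall U' t', Om U' -> 0 <= t' <= 1 ->
      close_lt N U U' dl -> Rabs (t' - t) < dl -> Cmod (Cminus (V U' t') (V U t)) < eps / 2).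
  { intros t; destruct (Rle_dec 0 t) as [H1 | H1]; [destruct (Rle_dec t 1) as [H2 | H2] |].
    - destruct (hVcont U t HU (conj H1 H2) (eps/2) ltac:(lra)) as [d [Pd Hd]].
      exists (mkposreal d Pd); intros _; exact Hd.
    - exists (mkposreal 1 Rlt_0_1); intros [_ Z]; lra.
    - exists (mkposreal 1 Rlt_0_1); intros [Z _]; lra. }
  set (delta := fun t => proj1_sig (constructive_indefinite_description _ (Hex t))).
  assert (Hdelta : forall t, 0 <= t <= 1 -> forall U' t', Om U' -> 0 <= t' <= 1 ->
      close_lt N U U' (delta t) -> Rabs (t' - t) < delta t -> Cmod (Cminus (V U' t') (V U t)) < eps / 2).
  { intros t; unfold delta; destruct (constructive_indefinite_description _ (Hex t)) as [dl Hdl]; exact Hdl. }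
  destruct (compactness_value_1d 0 1 delta) as [dd Hdd].
  exists (Rmin dd d0); split; [apply Rmin_pos; [apply cond_pos | auto]|].
  intros h t Hh Hd Ht; simpl; rewrite clamp01_id by exact Ht.
  pose proof (Rmin_l dd d0); pose proof (Rmin_r dd d0).
  assert (HOm : Om (shift_coord U j h)) by (apply Hd0, close_lt_shift_coord; lra).
  apply NNPP; intros Hneg; apply (Hdd t Ht); intros [tt [Htt [Hx Hle]]]; apply Hneg.
  assert (A1 : Cmod (Cminus (V (shift_coord U j h) t) (V U tt)) < eps / 2)
    by (apply Hdelta; auto; apply close_lt_shift_coord; lra).
  assert (A2 : Cmod (Cminus (V U t) (V U tt)) < eps / 2)
    by (apply Hdelta; auto; apply close_lt_refl, cond_pos).
  replace (Cminus (V (shift_coord U j h) t) (V U t))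
    with (Cminus (Cminus (V (shift_coord U j h) t) (V U tt)) (Cminus (V U t) (V U tt))) by ring.
  eapply Rle_lt_trans; [apply Cmod_sub_le | lra].
Qed.

Definition slope (U : nat -> C) (i j : nat) : C := Cdiv (RtoC (IZR n / 2)) (Cminus (U j) (U i)).

Lemma V_bounded_small_shift U : Om U -> ev_bounded small_shift (fun x => V U (clamp01 (snd x))).
Proof. intros HU; apply ev_bounded_small_shift, V_continuous_on01; auto. Qed.

Lemma V_bounded_away_small_shift U : Om U -> ev_bounded_away small_shift (fun x => V U (clamp01 (snd x))).
Proof. intros HU; apply ev_bounded_away_small_shift; [apply V_continuous_on01 | apply V_neq_0]; auto. Qed.

Lemma inv_gamma_sub_bounded_small_shift U k : Om U -> (k < N)%nat ->
  ev_bounded small_shift (fun x => Cinv (Cminus (gamma (clamp01 (snd x))) (U k))).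
Proof.
  intros HU Hk; apply (ev_bounded_inv small_shift).
  apply (ev_bounded_away_small_shift (fun t => Cminus (gamma t) (U k)));
    [apply gamma_sub_continuous_on01 | apply gamma_sub_neq_0; auto].
Qed.

Lemma V_shift_first_order U j : Om U -> (j < N)%nat ->
  first_order small_shift fst
    (fun x => V (shift_coord U j (fst x)) (clamp01 (snd x))) (fun x => V U (clamp01 (snd x)))
    (fun x => Cmult (V U (clamp01 (snd x)))
                    (Cmult (Copp (Cinv (Cminus (gamma (clamp01 (snd x))) (U j)))) (RtoC (/2)))).
Proof.
  intros HU Hj; destruct (hOm U HU) as [d0 [Pd0 Hd0]].
  set (z := fun x : C * R => gamma (clamp01 (snd x))).
  assert (Hsq : small_shift (fun x => Cmult (V (shift_coord U j (fst x)) (clamp01 (snd x)))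
                                            (V (shift_coord U j (fst x)) (clamp01 (snd x)))
                                      = Cprod_lt N (fun k => Cminus (z x) (shift_coord U j (fst x) k)))).
  { exists d0; split; auto; intros h t _ Hh _.
    apply hVcurve, clamp01_in; apply Hd0, close_lt_shift_coord; exact Hh. }
  apply (first_order_sqrt small_shift fst _ _ _ (fun x => Cprod_lt N (fun k => Cminus (z x) (U k)))
    (fun x => Copp (Cinv (Cminus (z x) (U j)))) Hsq (fun x => hVcurve U HU _ (clamp01_in (snd x)))).
  - apply (first_order_Cprod_shift_coord small_shift); [exact Hj | intros x; apply gamma_sub_neq_0, clamp01_in; auto].
  - apply V_shift_tends; auto.
  - apply V_bounded_away_small_shift; auto.
  - apply V_bounded_small_shift; auto.
  - apply (ev_bounded_opp small_shift), inv_gamma_sub_bounded_small_shift; auto.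
Qed.

Lemma form_shift_first_order U i j : Om U -> (i < N)%nat -> (j < N)%nat -> i <> j ->
  first_order small_shift fst
    (fun x => form (shift_coord U j (fst x)) i (clamp01 (snd x)))
    (fun x => form U i (clamp01 (snd x)))
    (fun x => Cmult (slope U i j) (Cminus (form U i (clamp01 (snd x))) (form U j (clamp01 (snd x))))).
Proof.
  intros HU Hi Hj Hij.
  set (a := fun x : C * R => V U (clamp01 (snd x))).
  set (K := fun x : C * R => Cmult (Copp (Cinv (Cminus (gamma (clamp01 (snd x))) (U j)))) (RtoC (/2))).
  set (B := fun x : C * R => Cmult (gamma' (clamp01 (snd x))) (Cinv (Cminus (gamma (clamp01 (snd x))) (U i)))).
  assert (La := V_bounded_away_small_shift U HU); assert (Ba := V_bounded_small_shift U HU).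
  assert (BK : ev_bounded small_shift K).
  { apply (ev_bounded_mul small_shift); [|apply (ev_bounded_const small_shift)].
    apply (ev_bounded_opp small_shift), inv_gamma_sub_bounded_small_shift; auto. }
  assert (BB : ev_bounded small_shift B).
  { apply (ev_bounded_mul small_shift);
      [apply ev_bounded_small_shift, gamma'_continuous_on01 | apply inv_gamma_sub_bounded_small_shift; auto]. }
  assert (DW := first_order_Cpowz small_shift _ _ a K n (V_shift_first_order U j HU Hj)
    vanishing_small_shift La Ba BK).
  generalize (first_order_mul small_shift _ _ _ _ _ _ (fun _ => RtoC 0) DW (first_order_refl _ fst B)
    vanishing_small_shift (ev_bounded_Cpowz _ a n La Ba) BB
    (ev_bounded_mul _ _ _ (ev_bounded_const _ _) BK) (ev_bounded_const _ _)).
  apply (first_order_ext small_shift); intros x; unfold form, Cdiv, B.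
  - rewrite shift_coord_other by auto; ring.
  - unfold a; ring.
  - assert (nzi := gamma_sub_neq_0 U i HU Hi _ (clamp01_in (snd x))).
    assert (nzj := gamma_sub_neq_0 U j HU Hj _ (clamp01_in (snd x))).
    assert (nzij : Cminus (U j) (U i) <> 0%C) by (apply Cminus_eq_contra, hdist; auto).
    unfold slope, a, K, Cdiv; unfold Rdiv; rewrite RtoC_mult, !RtoC_inv by lra.
    field; repeat split; auto; intro E; injection E; lra.
Qed.

Lemma a_coef_partial U i j : Om U -> (i < N)%nat -> (j < N)%nat -> i <> j ->
  has_partial (a_coef n gamma gamma' V i) U j
    (Cmult (Cdiv (IZR n) 2)
       (Cdiv (Cminus (a_coef n gamma gamma' V i U) (a_coef n gamma gamma' V j U)) (Cminus (U j) (U i)))).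
Proof.
  intros HU Hi Hj Hij; apply filterlim_locally'_0_C; intros eps Heps.
  destruct (hOm U HU) as [d0 [Pd0 Hd0]].
  destruct (form_shift_first_order U i j HU Hi Hj Hij eps Heps) as [d [Pd Hd]].
  exists (Rmin d d0); split; [apply Rmin_pos; auto|]; intros h Hh Hdh.
  pose proof (Rmin_l d d0); pose proof (Rmin_r d d0).
  assert (HOm : Om (shift_coord U j h)) by (apply Hd0, close_lt_shift_coord; lra).
  rewrite !a_coef_RInt_clamp01.
  set (Fh := fun t => form (shift_coord U j h) i (clamp01 t)).
  set (F0 := fun t => form U i (clamp01 t)).
  set (Fj := fun t => form U j (clamp01 t)).
  set (A := RInt (V := C_R_CompleteNormedModule) Fh 0 1).
  set (A0 := RInt (V := C_R_CompleteNormedModule) F0 0 1).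
  set (Aj := RInt (V := C_R_CompleteNormedModule) Fj 0 1).
  assert (I1 : is_RInt (V := C_R_NormedModule) Fh 0 1 A)
    by (apply (RInt_correct (V := C_R_CompleteNormedModule)), ex_RInt_form; auto).
  assert (I2 : is_RInt (V := C_R_NormedModule) F0 0 1 A0)
    by (apply (RInt_correct (V := C_R_CompleteNormedModule)), ex_RInt_form; auto).
  assert (I3 : is_RInt (V := C_R_NormedModule) Fj 0 1 Aj)
    by (apply (RInt_correct (V := C_R_CompleteNormedModule)), ex_RInt_form; auto).
  assert (IS : is_RInt (V := C_R_NormedModule)
    (fun t => Cminus (Cminus (Fh t) (F0 t)) (Cmult h (Cmult (slope U i j) (Cminus (F0 t) (Fj t))))) 0 1
    (Cminus (Cminus A A0) (Cmult h (Cmult (slope U i j) (Cminus A0 Aj))))).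
  { apply (is_RInt_minus (V := C_R_NormedModule)); [apply (is_RInt_minus (V := C_R_NormedModule)); auto|].
    apply is_RInt_Cmult_l, is_RInt_Cmult_l, (is_RInt_minus (V := C_R_NormedModule)); auto. }
  assert (Bd := norm_RInt_le_const (V := C_R_NormedModule) _ 0 1 _ (eps * Cmod h) ltac:(lra)
    (fun t Ht => eq_ind_r (fun r => r <= eps * Cmod h) (Hd h t Hh ltac:(lra) Ht) (norm_C_R _)) IS).
  rewrite norm_C_R in Bd.
  assert (nzij : Cminus (U j) (U i) <> 0%C) by (apply Cminus_eq_contra, hdist; auto).
  replace (Cminus (Cdiv (Cminus A A0) h) (Cmult (Cdiv (IZR n) 2) (Cdiv (Cminus A0 Aj) (Cminus (U j) (U i)))))
    with (Cmult (Cminus (Cminus A A0) (Cmult h (Cmult (slope U i j) (Cminus A0 Aj)))) (Cinv h)).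
  2:{ unfold slope, Cdiv, Rdiv; rewrite RtoC_mult, RtoC_inv by lra.
      field; repeat split; auto; intro E; injection E; lra. }
  rewrite Cmod_mult, Cmod_inv by auto.
  assert (Ph : 0 < Cmod h) by (apply Cmod_gt_0; auto).
  apply Rmult_le_reg_r with (Cmod h); auto.
  rewrite Rmult_assoc, Rinv_l by lra; lra.
Qed.

End Cycle_integrals.

Theorem theorem1
  (g : nat) (hg : (1 <= g)%nat)
  (n : Z) (hn : n <> 0%Z)
  (Om : (nat -> C) -> Prop) (hOm : open_CN (2 * g + 1) Om)
  (hdist : forall U, Om U -> forall i j, (i < 2 * g + 1)%nat -> (j < 2 * g + 1)%nat ->
      i <> j -> U i <> U j)
  (gamma gamma' : R -> C)
  (hgd : forall t, is_derive (V := C_R_NormedModule) gamma t (gamma' t))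
  (hgc : forall t, continuous gamma' t)
  (hgclosed : gamma 0 = gamma 1)
  (havoid : forall U, Om U -> forall t, 0 <= t <= 1 ->
      forall k, (k < 2 * g + 1)%nat -> gamma t <> U k)
  (V : (nat -> C) -> R -> C)
  (hVcurve : forall U, Om U -> forall t, 0 <= t <= 1 ->
      Cmult (V U t) (V U t) = Cprod_lt (2 * g + 1) (fun k => Cminus (gamma t) (U k)))
  (hVclosed : forall U, Om U -> V U 0 = V U 1)
  (hVcont : jointly_continuous_on (2 * g + 1) Om V) :
  forall U, Om U ->
    (forall i j, (i < 2 * g + 1)%nat -> (j < 2 * g + 1)%nat -> i <> j ->
       has_partial (a_coef n gamma gamma' V i) U j
         (Cmult (Cdiv (IZR n) 2)
            (Cdiv (Cminus (a_coef n gamma gamma' V i U) (a_coef n gamma gamma' V j U))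
                  (Cminus (U j) (U i)))))
    /\ Csum_lt (2 * g + 1) (fun i => a_coef n gamma gamma' V i U) = RtoC 0.
Proof.
  intros U HU; split.
  - intros i j Hi Hj Hij.
    exact (a_coef_partial _ n Om gamma gamma' V hOm hdist hgd hgc havoid hVcurve hVcont U i j HU Hi Hj Hij).
  - exact (Csum_a_coef _ n Om gamma gamma' V hn hgd hgc havoid hVcurve hVclosed hVcont U HU).
Qed.
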